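(* Let $X$ be a one-sided subshift with $\sigma(X)=X$ which is aperiodic and satisfies $|Sp_l(X,\sigma)|<\infty$. Then $(\widetilde{X},\sigma_{\widetilde{X}})$ is a zero-dimensional compact metrizable system in which $\sigma_{\widetilde{X}}$ is an aperiodic surjective local homeomorphism, and moreover: (i) $|Sp_l(\widetilde{X},\sigma_{\widetilde{X}})|=|Sp_l(X,\sigma)|<\infty$; (ii) every point of $Sp_l(\widetilde{X},\sigma_{\widetilde{X}})$ is an isolated point of $\widetilde{X}$.
   Context: $X\subseteq\mathcal{A}^{\mathbb{N}}$ is a closed shift-invariant set over a finite alphabet $\mathcal{A}$, $\sigma$ the left shift. Aperiodic: no point $x$ with $\sigma^n(x)=x$ for some $n\ge1$. For a map $T$ on $Y$, $Sp_l(Y,T)=\{y: |T^{-1}(\{y\})|\ge2\}$. The cover: for $x\in X$, $l\ge0$, $P_l(x)=\{\mu\in\mathcal{L}(X): |\mu|=l,\ \mu x\in X\}$. Let $\mathcal{I}=\{(k,l)\in\mathbb{N}^2: k\le l\}$ with $(k,l)\preceq(k',l')$ iff $k\le k'$ and $l-k\le l'-k'$. For $(k,l)\in\mathcal{I}$, $x\overset{k,l}{\sim}y$ iff $x_{[0,k)}=y_{[0,k)}$ and $P_l(\sigma^k(x))=P_l(\sigma^k(y))$; ${}_kX_l=X/\overset{k,l}{\sim}$ (finite, discrete), classes ${}_k[x]_l$. $\widetilde{X}$ is the projective limit of $({}_kX_l)$ under the maps ${}_{k'}[x]_{l'}\mapsto{}_k[x]_l$ for $(k,l)\preceq(k',l')$.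 The shift is $\sigma_{\widetilde{X}}(\tilde{x})_{(k,l)}={}_k[\sigma(z)]_l$ for any representative $z$ of $\tilde{x}_{(k+1,l+1)}$. A map is a local homeomorphism if each point has an open neighbourhood on which it restricts to a homeomorphism onto an open set. *)

From HB Require Import structures.
From mathcomp Require Import all_boot all_order all_algebra.
From mathcomp Require Import all_classical all_reals.
From mathcomp Require Import topology_structure uniform_structure
  pseudometric_structure compact connected separation_axioms
  discrete_topology product_topology subspace_topology subtype_topology
  function_spaces.
From Stdlib Require Import Rdefinitions.

Set Implicit Arguments.
Unset Strict Implicit.
Unset Printing Implicit Defensive.

Local Open Scope classical_set_scope.

Definition fullshift (A : finType) : topologicalType :=
  {ptws nat -> discrete_topology A}.

Definition shift {A : finType} (x : nat -> A) : nat -> A := fun n => x n.+1.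

Definition subshift {A : finType} (X : set (nat -> A)) : Prop :=
  closed (X : set (fullshift A)) /\ shift @` X `<=` X.

Definition aperiodic_on {T : Type} (Y : set T) (f : T -> T) : Prop :=
  forall x, Y x -> forall n, (1 <= n)%N -> iter n f x <> x.

Definition Spl {T : Type} (Y : set T) (f : T -> T) : set T :=
  [set y | Y y /\ exists y1 y2, [/\ Y y1, Y y2, y1 <> y2, f y1 = y & f y2 = y]].

Definition lang {A : finType} (X : set (nat -> A)) : set (seq A) :=
  [set mu | exists x, X x /\ exists i, mu = [seq x (i + j)%N | j <- iota 0 (size mu)]].

Definition catw {A : finType} (mu : seq A) (x : nat -> A) : nat -> A :=
  fun n => if (n < size mu)%N then nth (x 0%N) mu n else x (n - size mu)%N.

Definition Pl {A : finType} (X : set (nat -> A)) (l : nat) (x : nat -> A)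
  : set (seq A) :=
  [set mu | lang X mu /\ size mu = l /\ X (catw mu x)].

Definition Idx := {p : nat * nat | (p.1 <= p.2)%N}.
Definition Ik (i : Idx) : nat := (sval i).1.
Definition Il (i : Idx) : nat := (sval i).2.
Definition Ile (i j : Idx) : Prop :=
  (Ik i <= Ik j)%N /\ (Il i - Ik i <= Il j - Ik j)%N.

Definition Isucc (i : Idx) : Idx :=
  exist (fun p : nat * nat => (p.1 <= p.2)%N) ((Ik i).+1, (Il i).+1) (proj2_sig i).

Definition kl_equiv {A : finType} (X : set (nat -> A)) (i : Idx)
  (x y : nat -> A) : Prop :=
  (forall n, (n < Ik i)%N -> x n = y n) /\
  Pl X (Il i) (iter (Ik i) shift x) = Pl X (Il i) (iter (Ik i) shift y).

Definition cls {A : finType} (X : set (nat -> A)) (i : Idx) (x : nat -> A)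
  : set (nat -> A) :=
  [set y | X y /\ kl_equiv X i x y].

(* Ambient space of families of classes: product over I of discrete spaces
   (each  _kX_l  is a subset of such a discrete space, hence discrete). *)
Definition Famspace (A : finType) : topologicalType :=
  prod_topology (fun _ : Idx => discrete_topology (set (nat -> A))).

Definition Xtilde {A : finType} (X : set (nat -> A)) : set (Famspace A) :=
  [set f | (forall i, exists x, X x /\ f i = cls X i x) /\
           (forall i j, Ile i j -> forall x, X x ->
              f j = cls X j x -> f i = cls X i x)].

Definition rep {A : finType} (c : set (nat -> A)) : option (nat -> A) :=
  match pselect (exists z, c z) with
  | left h => Some (proj1_sig (cid h))
  | right _ => None
  end.

Definition shift_tilde {A : finType} (X : set (nat -> A)) (f : Famspace A)
  : Famspace A :=
  fun i => match rep (f (Isucc i)) with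
           | Some z => cls X i (shift z)
           | None => set0
           end.

(* sigma_{X~} as a self-map of the (topological) subtype X~ ; the fallback
   branch is never used, as shift_tilde preserves X~ (asserted in the theorem). *)
Definition sigma_tilde {A : finType} (X : set (nat -> A)) (t : Xtilde X)
  : Xtilde X :=
  match pselect (shift_tilde X (val t) \in Xtilde X) with
  | left h => exist _ (shift_tilde X (val t)) h
  | right _ => t
  end.

Definition metrizable (T : topologicalType) : Prop :=
  exists d : T -> T -> R,
    [/\ (forall x y, Rle 0 (d x y)),
        (forall x y, d x y = 0%R <-> x = y),
        (forall x y, d x y = d y x),
        (forall x y z, Rle (d x z) (Rplus (d x y) (d y z))) &
        (forall U : set T, open U <->
           forall x, U x -> exists e, Rlt 0 e /\ [set y | Rlt (d x y) e] `<=` U)].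

Definition local_homeo (T : topologicalType) (f : T -> T) : Prop :=
  forall x, exists U : set T,
    [/\ open U, U x, open (f @` U), set_inj U f &
        {within U, continuous f} /\
        (forall V : set T, open V -> V `<=` U -> open (f @` V))].

Definition isolated_point (T : topologicalType) (x : T) : Prop := open [set x].

Arguments sigma_tilde {A} X t.
Arguments shift_tilde {A} X f i.
Arguments Xtilde {A} X _.
Arguments cls {A} X i x _.
Arguments Pl {A} X l x _.

(* A point t of X~ is a compatible family of classes.  Its classes prescribe
   longer and longer prefixes, which glue to a point y of X (X is closed): the
   point underlying t, on which sigma~ acts as the shift; this gives aperiodicity.
   The preimages of t are the families obtained by prepending to t a letter
   allowed before its (0,1)-class; they exist because sigma(X) = X, and are
   determined by that letter, so sigma~ is surjective and, on each cylinder
   fixing the (1,1)-class, a homeomorphism onto an open set.  If t has two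
   preimages, y admits two letters, so y lies in Sp_l(X).  The finitely many
   points of Sp_l(X) are separated by their first K letters, hence the
   (K,K+1)-class of t already forces t to be the family of classes of y:
   t |-> y is a bijection Sp_l(X~) -> Sp_l(X) and {t} is a cylinder.
   Compactness and metrizability hold because every _kX_l is finite and the
   index set is countable and directed. *)

From Stdlib Require Import Reals Lra.
From HB Require Import structures.
From mathcomp Require Import all_boot all_order all_algebra.
From mathcomp Require Import all_classical all_reals.
From mathcomp Require Import topology_structure uniform_structure
  pseudometric_structure compact connected separation_axioms
  discrete_topology product_topology subspace_topology subtype_topology
  function_spaces supremum_topology initial_topology.
From mathcomp Require Import zify.

Set Implicit Arguments.
Unset Strict Implicit.
Unset Printing Implicit Defensive.
Local Open Scope classical_set_scope.

Section Words.
Variable A : finType.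
Implicit Types (x : nat -> A) (mu nu : seq A).

Lemma iter_shiftE k x n : iter k shift x n = x (k + n)%N.
Proof. by elim: k n => [|k IH] n //=; rewrite /shift IH addSnnS. Qed.

Lemma catw_nil x : catw [::] x = x.
Proof. by apply: funext => n; rewrite /catw /= subn0. Qed.

Lemma iter_shift_catw mu x : iter (size mu) shift (catw mu x) = x.
Proof. by apply: funext => n; rewrite iter_shiftE /catw ltnNge leq_addr /= addKn. Qed.

Lemma shift_catw1 a x : shift (catw [:: a] x) = x.
Proof. exact: (iter_shift_catw [:: a] x). Qed.

Lemma catw_cat mu nu x : catw mu (catw nu x) = catw (mu ++ nu) x.
Proof.
apply: funext => n; rewrite /catw size_cat nth_cat.
case: (ltnP n (size mu)) => Hmu; first by rewrite ltn_addr //; exact: set_nth_default.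
case: (ltnP (n - size mu) (size nu)) => Hnu.
  by rewrite (_ : n < size mu + size nu); [exact: set_nth_default|lia].
by rewrite (_ : n < size mu + size nu = false) ?subnDA //; lia.
Qed.

Lemma catw_head_shift x : catw [:: x 0%N] (shift x) = x.
Proof. by apply: funext => -[|n] //; rewrite /catw /= /shift subn1. Qed.

Lemma catw_head_shiftE a x : x 0%N = a -> catw [:: a] (shift x) = x.
Proof. by move=> <-; exact: catw_head_shift. Qed.

Lemma lang_catw (X : set (nat -> A)) mu x : X (catw mu x) -> lang X mu.
Proof.
move=> Hmux; exists (catw mu x); split => //; exists 0%N.
rewrite -{1}(mkseq_nth (x 0%N) mu) /mkseq; apply/eq_in_map => j.
by rewrite mem_iota add0n /catw => /andP [_ ->].
Qed.

Lemma catw_window_iter_shift k k' x : (k <= k')%N ->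
  catw [seq x (k + j)%N | j <- iota 0 (k' - k)] (iter k' shift x) = iter k shift x.
Proof.
move=> le_kk'; apply: funext => n; rewrite /catw size_map size_iota !iter_shiftE.
case: ltnP => Hn; first by rewrite (nth_map 0%N) ?size_iota // nth_iota.
congr x; lia.
Qed.

End Words.

Lemma finite_seqs_separated (A : Type) (S : set (nat -> A)) : finite_set S ->
  exists K, forall u v, S u -> S v -> (forall n, (n < K)%N -> u n = v n) -> u = v.
Proof.
move=> finS; pose dif (p : (nat -> A) * (nat -> A)) : nat :=
  if pselect (exists n, p.1 n <> p.2 n) is left h then proj1_sig (cid h) else 0%N.
have [F HF] := finite_fsetP.1 (finite_image dif (finite_setX finS finS)).
exists (\max_(d <- finmap.enum_fset F) d.+1)%N => u v Su Sv agree_uv.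
apply: funext => n; apply: contrapT => neq_n.
have : u (dif (u, v)) <> v (dif (u, v)).
  rewrite /dif; case: pselect => [h|[]]; [exact: (proj2_sig (cid h))|by exists n].
apply; apply: agree_uv.
have : [set dif p | p in S `*` S] (dif (u, v)) by exists (u, v).
rewrite HF => dif_F.
exact: (@leq_bigmax_seq nat _ xpredT (fun i => i.+1) _ dif_F isT).
Qed.

Lemma ultra_bigcup T (F : set_system T) (K : eqType) (s : seq K) (P : K -> set T) :
  UltraFilter F -> F [set x | exists2 v, v \in s & P v x] -> exists v, F (P v).
Proof.
move=> FU; elim: s => [|v s IH] Fs.
  by have [x [v]] := filter_ex Fs; rewrite in_nil.
case: (in_ultra_setVsetC (P v) FU) => Fv; first by exists v.
apply: IH; apply: filterS (filterI Fs Fv) => x [[w Hw Pwx] nPvx].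
exists w => //; move: Hw; rewrite inE => /orP [/eqP Ewv|//].
by rewrite Ewv in Pwx.
Qed.

Definition mkI k l (h : (k <= l)%N) : Idx :=
  exist (fun p : nat * nat => (p.1 <= p.2)%N) (k, l) h.
Definition Ilsucc (i : Idx) : Idx := @mkI (Ik i) (Il i).+1 (leqW (proj2_sig i)).
Definition I01 : Idx := @mkI 0 1 isT.
Definition I11 : Idx := @mkI 1 1 isT.
Definition Ikk (k : nat) : Idx := @mkI k k (leqnn k).
Definition Ikk1 (k : nat) : Idx := @mkI k k.+1 (leqnSn k).

Lemma Ik_le_Il (i : Idx) : (Ik i <= Il i)%N.
Proof. exact: proj2_sig i. Qed.

Ltac unfold_Idx := rewrite /Ile /Isucc /Ilsucc /mkI /I01 /I11 /Ikk1 /= /Ik /Il /=.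

Lemma Ile_trans i j m : Ile i j -> Ile j m -> Ile i m.
Proof. by rewrite /Ile => -[? ?] [? ?]; split; lia. Qed.

Lemma Ile_directed i j : exists m, Ile i m /\ Ile j m.
Proof.
have h : (maxn (Ik i) (Ik j) <= maxn (Ik i) (Ik j) + maxn (Il i - Ik i) (Il j - Ik j))%N
  by apply: leq_addr.
by exists (mkI h); unfold_Idx; split; split; lia.
Qed.

Lemma Ile_ub_seq (s : seq Idx) : exists m, forall i, i \in s -> Ile i m.
Proof.
elim: s => [|i s [m Hm]]; first by exists I01.
have [m' [le_im' le_mm']] := Ile_directed i m; exists m' => j.
by rewrite inE => /orP [/eqP ->|/Hm le_jm] //; exact: Ile_trans le_jm le_mm'.
Qed.

Lemma Ile_Isucc i : Ile i (Isucc i).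
Proof. by unfold_Idx; split; lia. Qed.

Lemma Ile_Isucc2 i j : Ile i j -> Ile (Isucc i) (Isucc j).
Proof. by unfold_Idx => -[? ?]; split; lia. Qed.

Lemma Ile_Ilsucc i : Ile i (Ilsucc i).
Proof. have := Ik_le_Il i; unfold_Idx => ?; split; lia. Qed.

Lemma Ile_Ilsucc2 i j : Ile i j -> Ile (Ilsucc i) (Ilsucc j).
Proof. have := Ik_le_Il i; have := Ik_le_Il j; unfold_Idx => ? ? [? ?]; split; lia. Qed.

Lemma Ile_I01_Ilsucc i : Ile I01 (Ilsucc i).
Proof. have := Ik_le_Il i; unfold_Idx => ?; split; lia. Qed.

Lemma Ile_I01_Ikk1 k : Ile I01 (Ikk1 k).
Proof. by unfold_Idx; split; lia. Qed.

Section PointwiseDiscrete.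
Variables (I : eqType) (T : choiceType).
Local Notation F := {ptws I -> discrete_topology T}.

Definition cyl (f : I -> T) (s : seq I) : set (I -> T) :=
  [set g | forall i, i \in s -> g i = f i].

Lemma ptws_discrete_nbhs (f : F) (B : set F) :
  nbhs f B -> exists s : seq I, cyl f s `<=` B.
Proof.
pose G := filter_from [set: seq I] (cyl f).
have FG : Filter G.
  apply: filter_from_filter; first by exists [::].
  move=> s1 s2 _ _; exists (s1 ++ s2) => // g Hg.
  by split => i Hi; apply: Hg; rewrite mem_cat Hi ?orbT.
suff : G --> f by move=> /(_ B) H /H [s _ Hs]; exists s.
apply/(@cvg_sup _ _ _ G f FG) => i U Uf.
have : nbhs (f : initial_topology (fun g : I -> discrete_topology T => g i)) U := Uf.
rewrite nbhsE => -[V [[W oW <-] Wf] VU]; exists [:: i] => // g Hg; apply: VU => /=.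
rewrite (Hg i (mem_head _ _)).
by move: oW; rewrite openE => /(_ _ Wf); rewrite /interior nbhs_principalE => /principal_filterP.
Qed.

Lemma ptws_discrete_open_coord (i : I) (c : T) : open ([set g | g i = c] : set F).
Proof.
have proj_i : continuous (fun g : F => g i) := @proj_continuous I (fun _ => discrete_topology T) i.
apply: (proj1 (continuousP _) proj_i [set c]).
by rewrite openE => x /= ->; rewrite /interior nbhs_principalE; apply/principal_filterP.
Qed.

Lemma subspace_ptws_discrete_nbhs (S : set F) (t : S) (U : set S) :
  nbhs t U -> exists s : seq I, [set u : S | cyl (val t) s (val u)] `<=` U.
Proof.
rewrite nbhsE => -[V [[W oW <-] Wt] VU].
have [s Hs] : exists s, cyl (val t) s `<=` W by apply: ptws_discrete_nbhs; rewrite nbhsE; exists W.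
by exists s => u Hu; apply: VU; exact: Hs.
Qed.

Lemma subspace_ptws_discrete_open_coord (S : set F) (i : I) (c : T) :
  open [set u : S | val u i = c].
Proof. by exists [set g | g i = c]; first exact: ptws_discrete_open_coord. Qed.

End PointwiseDiscrete.

Lemma subshift_prefix_closed (A : finType) (X : set (nat -> A)) (y : nat -> A) :
  subshift X -> (forall m, exists x, X x /\ forall n, (n < m)%N -> x n = y n) -> X y.
Proof.
move=> [closedX _] Hy; apply: closedX => B /= /(@ptws_discrete_nbhs nat A y B) [s Hs].
have [x [Xx Hxy]] := Hy (\max_(i <- s) i.+1)%N.
exists x; split => //; apply: Hs => i Hi; apply: Hxy.
exact: (@leq_bigmax_seq nat s xpredT (fun i => i.+1) i Hi isT).
Qed.

Section ProjectiveLimit.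
Variables (A : finType) (X : set (nat -> A)).
Hypotheses (subshiftX : subshift X) (shiftX : shift @` X = X).
Implicit Types (x y z w : nat -> A) (mu nu : seq A) (i j : Idx) (f g : Famspace A).
Local Notation ke := (kl_equiv X).
Local Notation Xt := (Xtilde X).

Lemma subshift_shift x : X x -> X (shift x).
Proof. by move=> Xx; case: subshiftX => _; apply; exists x. Qed.

Lemma subshift_iter n x : X x -> X (iter n shift x).
Proof. by elim: n => //= n IH Xx; apply/subshift_shift/IH. Qed.

Lemma subshift_preimage_letter x : X x -> exists a, X (catw [:: a] x).
Proof.
by rewrite -{1}shiftX => -[z Xz <-]; exists (z 0%N); rewrite catw_head_shift.
Qed.

Lemma subshift_preimage_word d x : X x -> exists nu, size nu = d /\ X (catw nu x).
Proof.
move=> Xx; elim: d => [|d [nu [<- Xnux]]]; first by exists [::]; rewrite catw_nil.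
have [a Xanux] := subshift_preimage_letter Xnux.
by exists (a :: nu); rewrite catw_cat in Xanux.
Qed.

(* A word of length l allowed before sigma^k x extends, by a preimage word on
   the left and the window x_[k,k') on the right, to one allowed before sigma^k' x. *)
Lemma Pl_iter_sub k k' l l' x y :
  (k <= k')%N -> (forall n, (k <= n < k')%N -> x n = y n) -> (l + (k' - k) <= l')%N ->
  Pl X l' (iter k' shift x) = Pl X l' (iter k' shift y) ->
  Pl X l (iter k shift x) `<=` Pl X l (iter k shift y).
Proof.
move=> le_kk' agree_xy le_ll' EP mu [_ [size_mu Xmux]].
set w := [seq x (k + m)%N | m <- iota 0 (k' - k)].
have Ew : w = [seq y (k + m)%N | m <- iota 0 (k' - k)].
  by apply/eq_in_map => m; rewrite mem_iota add0n => /andP [_ Hm]; apply: agree_xy; lia.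
have [nu [size_nu Xnu]] := subshift_preimage_word (l' - l - (k' - k)) Xmux.
have : Pl X l' (iter k' shift x) (nu ++ mu ++ w).
  have Xx : X (catw (nu ++ mu ++ w) (iter k' shift x)).
    by rewrite -!catw_cat catw_window_iter_shift.
  split; first exact: lang_catw Xx.
  by split => //; rewrite !size_cat size_nu size_mu size_map size_iota; lia.
rewrite EP => -[_ [_]]; rewrite Ew -!catw_cat catw_window_iter_shift // => Xy.
split; [exact: lang_catw Xmux|split => //].
by have := subshift_iter (size nu) Xy; rewrite iter_shift_catw.
Qed.

Lemma Pl_iter_eq k k' l l' x y :
  (k <= k')%N -> (forall n, (k <= n < k')%N -> x n = y n) -> (l + (k' - k) <= l')%N ->
  Pl X l' (iter k' shift x) = Pl X l' (iter k' shift y) ->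
  Pl X l (iter k shift x) = Pl X l (iter k shift y).
Proof.
move=> le_kk' agree_xy le_ll' EP; apply/seteqP; split; first exact: Pl_iter_sub EP.
by apply: Pl_iter_sub (esym EP) => // n /agree_xy ->.
Qed.

Lemma kl_equiv_sym i x y : ke i x y -> ke i y x.
Proof. by move=> [Exy EP]; split => // n /Exy ->. Qed.

Lemma kl_equiv_trans i x y z : ke i x y -> ke i y z -> ke i x z.
Proof. by move=> [Exy EPxy] [Eyz EPyz]; split=> [n Hn|]; rewrite ?Exy ?Eyz ?EPxy. Qed.

Lemma kl_equiv_mono i j x y : Ile i j -> ke j x y -> ke i x y.
Proof.
move=> [le_k le_lk] [Exy EP]; split=> [n Hn|]; first by apply: Exy; lia.
apply: (Pl_iter_eq le_k _ _ EP); first by move=> n /andP [_ /Exy].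
by have := Ik_le_Il i; have := Ik_le_Il j; lia.
Qed.

Lemma kl_equiv_shift i x y : ke (Isucc i) x y -> ke i (shift x) (shift y).
Proof.
move=> [Exy EP]; split=> [n Hn|]; first by apply: Exy; rewrite /Ik /=; rewrite -/(Ik i); lia.
rewrite -!iterSr; apply: (Pl_iter_eq (k' := (Ik i).+1) (l' := (Il i).+1) _ _ _ EP) => //.
- by move=> n; lia.
- by lia.
Qed.

Lemma kl_equiv_cons i a x y : ke (Ilsucc i) x y -> ke i (catw [:: a] x) (catw [:: a] y).
Proof.
move=> [Exy EP]; have Exy' n : (n < Ik i)%N -> catw [:: a] x n.+1 = catw [:: a] y n.+1.
  by move=> Hn; rewrite /catw /= subn1 /= Exy.
split=> [[|n] Hn|] //; first by apply: Exy'; lia.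
apply: (Pl_iter_eq (k' := (Ik i).+1) (l' := (Il i).+1)) => //.
- by case=> [|n] // /andP [_ Hn]; apply: Exy'; lia.
- by lia.
- by rewrite !iterSr !shift_catw1.
Qed.

Lemma cls_refl i x : X x -> cls X i x x.
Proof. by move=> Xx; split. Qed.

Lemma eq_cls i x y : ke i x y -> cls X i x = cls X i y.
Proof.
move=> Exy; apply/seteqP; split=> z [Xz Exz]; split => //.
  exact: kl_equiv_trans (kl_equiv_sym Exy) Exz.
exact: kl_equiv_trans Exy Exz.
Qed.

Lemma cls_equiv i x y : cls X i x y -> ke i x y.
Proof. by case. Qed.

Lemma cls_inj i x y : X y -> cls X i x = cls X i y -> ke i x y.
Proof. by move=> Xy E; apply: cls_equiv; rewrite E; exact: cls_refl. Qed.

Lemma Xtilde_nonempty f i : Xt f -> exists z, f i z.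
Proof. by move=> [Hf _]; have [x [Xx ->]] := Hf i; exists x; exact: cls_refl. Qed.

Lemma XtildeE f i z : Xt f -> f i z -> X z /\ f i = cls X i z.
Proof.
move=> [Hf _]; have [x [Xx ->]] := Hf i => -[Xz Exz].
by split => //; exact: eq_cls.
Qed.

Lemma Xtilde_mono f i j z : Xt f -> Ile i j -> f j z -> f i z.
Proof.
move=> Hf le_ij fjz; have [Xz Efj] := XtildeE Hf fjz.
by case: Hf => _ /(_ _ _ le_ij _ Xz Efj) ->; exact: cls_refl.
Qed.

Lemma Xtilde_equiv f i z z' : Xt f -> f i z -> f i z' -> ke i z z'.
Proof. by move=> Hf fiz; have [_ ->] := XtildeE Hf fiz => /cls_equiv. Qed.

Lemma Xtilde_eq_mono f g i j : Xt f -> Xt g -> Ile i j -> f j = g j -> f i = g i.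
Proof.
move=> Hf Hg le_ij Efg; have [z fjz] := Xtilde_nonempty j Hf.
have gjz : g j z by rewrite -Efg.
have [_ ->] := XtildeE Hf (Xtilde_mono Hf le_ij fjz).
by have [_ ->] := XtildeE Hg (Xtilde_mono Hg le_ij gjz).
Qed.

Lemma Xtilde_cls x : X x -> Xt (fun i => cls X i x).
Proof.
move=> Xx; split=> [i|i j le_ij y Xy /= E]; first by exists x.
by apply/eq_cls/(kl_equiv_mono le_ij)/cls_inj.
Qed.

Lemma rep_some (c : set (nat -> A)) z : c z -> exists z', rep c = Some z' /\ c z'.
Proof.
move=> cz; rewrite /rep; case: pselect => [h|[]]; last by exists z.
by exists (proj1_sig (cid h)); split => //; exact: (proj2_sig (cid h)).
Qed.

Lemma shift_tildeE f i z : Xt f -> f (Isucc i) z -> shift_tilde X f i = cls X i (shift z).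
Proof.
move=> Hf fz; rewrite /shift_tilde; have [z' [-> fz']] := rep_some fz.
by apply/eq_cls/kl_equiv_shift; exact: Xtilde_equiv Hf fz' fz.
Qed.

Lemma Xtilde_shift_tilde f : Xt f -> Xt (shift_tilde X f).
Proof.
move=> Hf; split=> [i|i j le_ij x Xx].
  have [z fz] := Xtilde_nonempty (Isucc i) Hf; rewrite (shift_tildeE Hf fz).
  by exists (shift z); split => //; apply: subshift_shift; case: (XtildeE Hf fz).
have [zj fzj] := Xtilde_nonempty (Isucc j) Hf; rewrite (shift_tildeE Hf fzj) => E.
have [zi fzi] := Xtilde_nonempty (Isucc i) Hf; rewrite (shift_tildeE Hf fzi).
have fzj' : f (Isucc i) zj := Xtilde_mono Hf (Ile_Isucc2 le_ij) fzj.
rewrite (eq_cls (kl_equiv_shift (Xtilde_equiv Hf fzi fzj'))).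
by apply/eq_cls/(kl_equiv_mono le_ij)/cls_inj.
Qed.

Lemma sigma_tildeE (t : Xt) : val (sigma_tilde X t) = shift_tilde X (val t).
Proof.
rewrite /sigma_tilde; case: pselect => // -[].
by apply/mem_set/Xtilde_shift_tilde; exact: set_valP t.
Qed.

Definition underlies f y := forall i z, f i z -> forall m, (m < Ik i)%N -> z m = y m.

Lemma underlies_ex f : Xt f -> exists2 y, underlies f y & X y.
Proof.
move=> Hf.
have [y Hy] : {y : nat -> A & forall m, exists2 z, f (Ikk m.+1) z & z m = y m}.
  apply: (@choice _ _ (fun m a => exists2 z, f (Ikk m.+1) z & z m = a)) => m.
  by have [z fz] := Xtilde_nonempty (Ikk m.+1) Hf; exists (z m), z.
have fy : underlies f y.
  move=> i z fz m Hm; have [zm fzm <-] := Hy m.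
  have [j [le_ij le_mj]] := Ile_directed i (Ikk m.+1).
  have [w fw] := Xtilde_nonempty j Hf.
  have [Ewz _] := Xtilde_equiv Hf (Xtilde_mono Hf le_ij fw) fz.
  have [Ewzm _] := Xtilde_equiv Hf (Xtilde_mono Hf le_mj fw) fzm.
  by rewrite -Ewz // Ewzm.
exists y => //; apply: subshift_prefix_closed subshiftX _ => m.
have [z fz] := Xtilde_nonempty (Ikk m) Hf; exists z.
by split=> [|n Hn]; [case: (XtildeE Hf fz)|exact: fy fz _ _].
Qed.

Lemma underlies_unique f y y' : Xt f -> underlies f y -> underlies f y' -> y = y'.
Proof.
move=> Hf fy fy'; apply: funext => m; have [z fz] := Xtilde_nonempty (Ikk m.+1) Hf.
by rewrite -(fy _ _ fz m) // (fy' _ _ fz m).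
Qed.

Lemma underlies_cls y : underlies (fun i => cls X i y) y.
Proof. by move=> i z /cls_equiv [Eyz _] m Hm; rewrite Eyz. Qed.

Lemma underlies_shift f y : Xt f -> underlies f y -> underlies (shift_tilde X f) (shift y).
Proof.
move=> Hf fy i z; have [z0 fz0] := Xtilde_nonempty (Isucc i) Hf.
rewrite (shift_tildeE Hf fz0) => /cls_equiv [Ez _] m Hm.
by rewrite -Ez //; apply: fy fz0 _ _.
Qed.

Lemma underlies_iter (t : Xt) y n :
  underlies (val t) y -> underlies (val (iter n (sigma_tilde X) t)) (iter n shift y).
Proof.
move=> ty; elim: n => //= n IH; rewrite sigma_tildeE.
by apply: underlies_shift => //; exact: set_valP.
Qed.

(* All points of the class f_(0,1) allow the same letters before them. *)
Definition admissible (a : A) f := forall w, f I01 w -> X (catw [:: a] w).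

Definition cons_tilde (a : A) f : Famspace A :=
  fun i => if rep (f (Ilsucc i)) is Some w then cls X i (catw [:: a] w) else set0.

Lemma kl_equiv01_catw a x y : ke I01 x y -> X (catw [:: a] x) -> X (catw [:: a] y).
Proof.
move=> [_ EP] Xax.
have : Pl X 1 (iter 0 shift x) [:: a] by split; [exact: lang_catw Xax|split].
by rewrite EP => -[_ [_ ?]].
Qed.

Lemma admissible_mono a f i w : Xt f -> admissible a f -> Ile I01 i -> f i w ->
  X (catw [:: a] w).
Proof. by move=> Hf fa le_i fw; apply/fa/(Xtilde_mono Hf le_i fw). Qed.

Lemma cons_tildeE a f i w : Xt f -> admissible a f -> f (Ilsucc i) w ->
  cons_tilde a f i = cls X i (catw [:: a] w).
Proof.
move=> Hf fa fw; rewrite /cons_tilde; have [w' [-> fw']] := rep_some fw.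
by apply/eq_cls/kl_equiv_cons; exact: Xtilde_equiv Hf fw' fw.
Qed.

Lemma Xtilde_cons_tilde a f : Xt f -> admissible a f -> Xt (cons_tilde a f).
Proof.
move=> Hf fa; split=> [i|i j le_ij x Xx].
  have [w fw] := Xtilde_nonempty (Ilsucc i) Hf; rewrite (cons_tildeE Hf fa fw).
  by exists (catw [:: a] w); split => //; exact: admissible_mono Hf fa (Ile_I01_Ilsucc i) fw.
have [w fw] := Xtilde_nonempty (Ilsucc j) Hf; rewrite (cons_tildeE Hf fa fw) => E.
rewrite (cons_tildeE Hf fa (Xtilde_mono Hf (Ile_Ilsucc2 le_ij) fw)).
by apply/eq_cls/(kl_equiv_mono le_ij)/cls_inj.
Qed.

Lemma shift_tilde_cons_tilde a f : Xt f -> admissible a f ->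
  shift_tilde X (cons_tilde a f) = f.
Proof.
move=> Hf fa; apply: funext => i; have [w fw] := Xtilde_nonempty (Ilsucc (Isucc i)) Hf.
have Xaw := admissible_mono Hf fa (Ile_I01_Ilsucc _) fw.
have faw : cons_tilde a f (Isucc i) (catw [:: a] w).
  by rewrite (cons_tildeE Hf fa fw); exact: cls_refl.
rewrite (shift_tildeE (Xtilde_cons_tilde Hf fa) faw) shift_catw1.
have le_i := Ile_trans (Ile_Isucc i) (Ile_Ilsucc (Isucc i)).
by have [_ ->] := XtildeE Hf (Xtilde_mono Hf le_i fw).
Qed.

Lemma underlies_cons_tilde a f y : Xt f -> admissible a f ->
  underlies (cons_tilde a f) y -> y 0%N = a.
Proof.
move=> Hf fa fay; have [w fw] := Xtilde_nonempty (Ilsucc I11) Hf.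
have Xaw := admissible_mono Hf fa (Ile_I01_Ilsucc _) fw.
have faw : cons_tilde a f I11 (catw [:: a] w) by rewrite (cons_tildeE Hf fa fw); exact: cls_refl.
by rewrite -(fay _ _ faw 0%N).
Qed.

Lemma shift_tilde_inj f f' y y' : Xt f -> Xt f' -> shift_tilde X f = shift_tilde X f' ->
  underlies f y -> underlies f' y' -> y 0%N = y' 0%N -> f = f'.
Proof.
move=> Hf Hf' Ef fy fy' Ey0; apply: funext => i.
have [z fz] := Xtilde_nonempty (Isucc (Ilsucc i)) Hf.
have [z' fz'] := Xtilde_nonempty (Isucc (Ilsucc i)) Hf'.
have Ez : ke (Ilsucc i) (shift z) (shift z').
  apply: cls_inj; last by rewrite -(shift_tildeE Hf fz) -(shift_tildeE Hf' fz') Ef.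
  by apply: subshift_shift; case: (XtildeE Hf' fz').
have Ezz' : ke i z z'.
  rewrite -(catw_head_shiftE (fy _ _ fz 0%N isT)) -(catw_head_shiftE (fy' _ _ fz' 0%N isT)) Ey0.
  exact: kl_equiv_cons.
have le_i := Ile_trans (Ile_Ilsucc i) (Ile_Isucc (Ilsucc i)).
have [_ ->] := XtildeE Hf (Xtilde_mono Hf le_i fz).
by have [_ ->] := XtildeE Hf' (Xtilde_mono Hf' le_i fz'); exact: eq_cls.
Qed.

Lemma admissible_head f y : Xt f -> underlies f y -> admissible (y 0%N) (shift_tilde X f).
Proof.
move=> Hf fy w; have [z fz] := Xtilde_nonempty (Isucc I01) Hf.
rewrite (shift_tildeE Hf fz) => /cls_equiv Ezw; apply: kl_equiv01_catw Ezw _.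
by rewrite (catw_head_shiftE (fy _ _ fz 0%N isT)); case: (XtildeE Hf fz).
Qed.

Lemma cons_tilde_head f y : Xt f -> underlies f y -> cons_tilde (y 0%N) (shift_tilde X f) = f.
Proof.
move=> Hf fy; have Hsf := Xtilde_shift_tilde Hf; have fa := admissible_head Hf fy.
have [y' ay' _] := underlies_ex (Xtilde_cons_tilde Hsf fa).
apply: (shift_tilde_inj (Xtilde_cons_tilde Hsf fa) Hf _ ay' fy).
  exact: shift_tilde_cons_tilde.
exact: underlies_cons_tilde ay'.
Qed.

Lemma Xtilde_valP (t : Xt) : Xt (val t).
Proof. exact: set_valP. Qed.

Definition Xcyl (t : Xt) i : set Xt := [set s | val s i = val t i].

(* I is directed, so finitely many coordinates are controlled by a single one. *)
Lemma Xtilde_nbhsP (t : Xt) (B : set Xt) : nbhs t B <-> exists i, Xcyl t i `<=` B.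
Proof.
split=> [|[i tiB]].
  move=> /(@subspace_ptws_discrete_nbhs Idx (set (nat -> A)) Xt) [s Hs].
  have [j Hj] := Ile_ub_seq s; exists j => u Eu; apply: Hs => i Hi.
  exact: Xtilde_eq_mono (Xtilde_valP u) (Xtilde_valP t) (Hj i Hi) Eu.
apply: filterS tiB _; apply: open_nbhs_nbhs; split => //.
exact: (@subspace_ptws_discrete_open_coord Idx (set (nat -> A)) Xt).
Qed.

Lemma Xtilde_openP (U : set Xt) : open U <-> forall t, U t -> exists i, Xcyl t i `<=` U.
Proof. by rewrite openE; split=> H t /H /Xtilde_nbhsP. Qed.

Lemma open_Xcyl t i : open (Xcyl t i).
Proof. by apply/Xtilde_openP => s Hs; exists i => u; rewrite /Xcyl /= Hs. Qed.

Lemma closed_Xcyl t i : closed (Xcyl t i).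
Proof.
have -> : Xcyl t i = ~` [set s | val s i <> val t i].
  by apply/seteqP; split=> s /=; [move=> -> ?|move=> /contrapT].
rewrite closedC; apply/Xtilde_openP => s Hs; exists i => u /= ->; exact: Hs.
Qed.

Lemma Xtilde_zero_dimensional : zero_dimensional Xt.
Proof.
move=> s t /eqP neq_st.
have [i Hi] : exists i, val s i <> val t i.
  apply: contrapT => H; apply/neq_st/val_inj/funext => i.
  by apply: contrapT => Hn; apply: H; exists i.
exists (Xcyl s i); split => //; first by split; [exact: open_Xcyl|exact: closed_Xcyl].
by move=> /= Eti; apply: Hi; rewrite Eti.
Qed.

Lemma sigma_tilde_continuous : continuous (sigma_tilde X).
Proof.
move=> t B /= /Xtilde_nbhsP [i tiB]; apply/Xtilde_nbhsP; exists (Isucc i) => s Es.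
have Es' : val s (Isucc i) = val t (Isucc i) := Es.
by apply: tiB; rewrite /Xcyl /= !sigma_tildeE /shift_tilde Es'.
Qed.

Lemma sigma_tilde_aperiodic : aperiodic_on X shift -> aperiodic_on [set: Xt] (sigma_tilde X).
Proof.
move=> aperX t _ n n_gt0 Et; have [y ty Xy] := underlies_ex (Xtilde_valP t).
have := underlies_iter (n := n) ty; rewrite Et => ty'.
exact: aperX Xy n n_gt0 (esym (underlies_unique (Xtilde_valP t) ty ty')).
Qed.

Lemma admissible_ex f : Xt f -> exists a, admissible a f.
Proof.
move=> Hf; have [w0 fw0] := Xtilde_nonempty I01 Hf; have [Xw0 _] := XtildeE Hf fw0.
have [a Xaw0] := subshift_preimage_letter Xw0; exists a => w fw.
exact: kl_equiv01_catw (Xtilde_equiv Hf fw0 fw) Xaw0.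
Qed.

Definition cons_Xtilde (a : A) f (Hf : Xt f) (fa : admissible a f) : Xt :=
  exist _ (cons_tilde a f) (mem_set (Xtilde_cons_tilde Hf fa)).

Lemma sigma_cons_Xtilde a f (Hf : Xt f) (fa : admissible a f) :
  sigma_tilde X (cons_Xtilde Hf fa) = exist _ f (mem_set Hf).
Proof. by apply: val_inj; rewrite sigma_tildeE /= shift_tilde_cons_tilde. Qed.

Lemma sigma_tilde_surj (t : Xt) : exists s, sigma_tilde X s = t.
Proof.
have [a ta] := admissible_ex (Xtilde_valP t); exists (cons_Xtilde (Xtilde_valP t) ta).
by rewrite sigma_cons_Xtilde; apply: val_inj.
Qed.

Lemma underlies_head_I11 (s t : Xt) y y' : underlies (val s) y -> underlies (val t) y' ->
  val s I11 = val t I11 -> y 0%N = y' 0%N.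
Proof.
move=> sy ty' E; have [z tz] := Xtilde_nonempty I11 (Xtilde_valP t).
by rewrite -(ty' _ _ tz 0%N isT) -(sy I11 z) // E.
Qed.

Lemma sigma_tilde_inj_Xcyl (t : Xt) : set_inj (Xcyl t I11) (sigma_tilde X).
Proof.
move=> s1 s2 /set_mem E1 /set_mem E2 Es; apply: val_inj.
have [y1 y1s _] := underlies_ex (Xtilde_valP s1).
have [y2 y2s _] := underlies_ex (Xtilde_valP s2).
have [y ty _] := underlies_ex (Xtilde_valP t).
apply: (shift_tilde_inj (Xtilde_valP s1) (Xtilde_valP s2) _ y1s y2s).
  by rewrite -!sigma_tildeE Es.
by rewrite (underlies_head_I11 y1s ty E1) (underlies_head_I11 y2s ty E2).
Qed.

(* Near sigma~ s, every point has the preimage obtained by prepending the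
   first letter of s, and that preimage stays near s. *)
Lemma sigma_tilde_open (V : set Xt) : open V -> open (sigma_tilde X @` V).
Proof.
move=> /Xtilde_openP oV; apply/Xtilde_openP => _ [s Vs <-].
have [i siV] := oV s Vs; have [y sy _] := underlies_ex (Xtilde_valP s).
have Hf := Xtilde_valP (sigma_tilde X s).
have fa : admissible (y 0%N) (val (sigma_tilde X s)).
  by rewrite sigma_tildeE; exact: admissible_head (Xtilde_valP s) sy.
exists (Ilsucc i) => u Eu; have Hu := Xtilde_valP u.
have ua : admissible (y 0%N) (val u).
  by move=> w uw; apply: fa; rewrite -(Xtilde_eq_mono Hu Hf (Ile_I01_Ilsucc i) Eu).
exists (cons_Xtilde Hu ua); last by rewrite sigma_cons_Xtilde; apply: val_inj.
apply: siV; rewrite /Xcyl /= -(cons_tilde_head (Xtilde_valP s) sy) -sigma_tildeE.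
have [w uw] := Xtilde_nonempty (Ilsucc i) Hu.
have sw : val (sigma_tilde X s) (Ilsucc i) w by rewrite -[val _ _]Eu.
by rewrite (cons_tildeE Hu ua uw) (cons_tildeE Hf fa sw).
Qed.

Lemma sigma_tilde_local_homeo : local_homeo (sigma_tilde X).
Proof.
move=> t; exists (Xcyl t I11); split => //.
- exact: open_Xcyl.
- exact/sigma_tilde_open/open_Xcyl.
- exact: sigma_tilde_inj_Xcyl.
- split; first exact/continuous_subspaceT/sigma_tilde_continuous.
  by move=> V oV _; exact: sigma_tilde_open.
Qed.

(* A finitely-valued invariant that determines the (k,l)-class. *)
Definition kl_key i x : ((Ik i).-tuple A * {set (Il i).-tuple A})%type :=
  ([tuple x j | j < Ik i],
   finset (fun mu : (Il i).-tuple A => `[< Pl X (Il i) (iter (Ik i) shift x) mu >])).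

Lemma kl_key_equiv i x y : kl_key i x = kl_key i y -> ke i x y.
Proof.
move=> E; split=> [n Hn|].
  by have := congr1 (fun p => tnth p.1 (Ordinal Hn)) E; rewrite !tnth_mktuple.
have Pl_sub x' y' : kl_key i x' = kl_key i y' ->
    Pl X (Il i) (iter (Ik i) shift x') `<=` Pl X (Il i) (iter (Ik i) shift y').
  move=> /(congr1 snd) /= E' mu Hmu; have size_mu : size mu == Il i by case: Hmu => _ [-> _].
  have : Tuple size_mu \in finset (fun mu : (Il i).-tuple A => `[< Pl X (Il i) (iter (Ik i) shift x') mu >]).
    by rewrite inE; apply/asboolP.
  by rewrite E' inE => /asboolP.
by apply/seteqP; split; apply: Pl_sub.
Qed.

(* _kX_l is finite, so an ultrafilter concentrates on one of its classes. *)
Lemma ultra_Xtilde_level (F : set_system Xt) : UltraFilter F ->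
  forall i, exists c, F [set s : Xt | val s i = c].
Proof.
move=> FU i; pose P v := [set s : Xt | exists2 z, val s i z & kl_key i z = v].
have [v Fv] : exists v, F (P v).
  apply: (@ultra_bigcup _ F _ (enum (@predT ((Ik i).-tuple A * {set (Il i).-tuple A})%type)) P FU).
  apply: filterS filterT => s _; have [z sz] := Xtilde_nonempty i (Xtilde_valP s).
  by exists (kl_key i z); [rewrite mem_enum|exists z].
have [s0 [z0 s0z0 Ez0]] := filter_ex Fv.
exists (val s0 i); apply: filterS Fv => s [z sz Ez] /=.
have [_ ->] := XtildeE (Xtilde_valP s) sz; have [_ ->] := XtildeE (Xtilde_valP s0) s0z0.
by apply/eq_cls/kl_key_equiv; rewrite Ez Ez0.
Qed.

Lemma Xtilde_compact : compact [set: Xt].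
Proof.
rewrite compact_ultra => F FU _.
have [g Fg] := choice (ultra_Xtilde_level FU).
have Xg : Xt g.
  split=> [i|i j le_ij x Xx Egj].
    have [s <-] := filter_ex (Fg i); exact: (Xtilde_valP s).1 i.
  have [s [<- Esj]] := filter_ex (filterI (Fg i) (Fg j)).
  by move: Esj => /= Esj; apply: ((Xtilde_valP s).2 i j le_ij x Xx); rewrite -Egj.
exists (exist _ g (mem_set Xg)); split => // B /Xtilde_nbhsP [j gjB].
exact: filterS gjB (Fg j).
Qed.

Definition enum_Idx (n : nat) : Idx := odflt I01 (unpickle n).

Lemma enum_Idx_surj i : exists n, enum_Idx n = i.
Proof. by exists (pickle i); rewrite /enum_Idx pickleK. Qed.

Definition agree (s t : Xt) n :=
  forall m, (m < n)%N -> val s (enum_Idx m) = val t (enum_Idx m).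

Lemma agree_sym s t n : agree s t n -> agree t s n.
Proof. by move=> Est m /Est ->. Qed.

Lemma neq_Xtilde_differ (s t : Xt) : s <> t ->
  exists n, ~~ `[< val s (enum_Idx n) = val t (enum_Idx n) >].
Proof.
move=> neq_st; apply: contrapT => Hn; apply/neq_st/val_inj/funext => i.
have [n <-] := enum_Idx_surj i; apply: contrapT => Hd; apply: Hn; exists n.
by apply/negP => /asboolP.
Qed.

(* Junk value 0 when s = t. *)
Definition first_diff (s t : Xt) : nat :=
  if pselect (s <> t) is left h then ex_minn (neq_Xtilde_differ h) else 0%N.

Lemma first_diffP (s t : Xt) : s <> t -> forall n, agree s t n <-> (n <= first_diff s t)%N.
Proof.
move=> neq_st n; rewrite /first_diff; case: pselect => // h; case: ex_minnP => k Hk Hmin.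
split=> [Ast|le_nk m Hm].
  by rewrite leqNgt; apply/negP => /Ast Em; move/negP: Hk; apply; apply/asboolP.
apply: contrapT => Hd; have : (k <= m)%N by apply: Hmin; apply/negP => /asboolP.
lia.
Qed.

Lemma first_diff_sym s t : first_diff s t = first_diff t s.
Proof.
have [->|neq_st] := pselect (s = t); first by [].
have neq_ts : t <> s by move=> /esym.
apply/eqP; rewrite eqn_leq.
by apply/andP; split; apply/first_diffP/agree_sym/first_diffP.
Qed.

Definition dist (s t : Xt) : R :=
  if pselect (s = t) is left _ then R0 else Rinv (INR (first_diff s t).+1).

Lemma invS_gt0 n : Rlt R0 (Rinv (INR n.+1)).
Proof. by apply/Rinv_0_lt_compat/lt_0_INR/ltP. Qed.

Lemma invS_le n m : (n <= m)%N -> Rle (Rinv (INR m.+1)) (Rinv (INR n.+1)).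
Proof. by move=> le_nm; apply: Rinv_le_contravar; [apply/lt_0_INR/ltP|apply/le_INR/leP]. Qed.

Lemma dist_ge0 s t : Rle R0 (dist s t).
Proof. by rewrite /dist; case: pselect => _; [exact: Rle_refl|exact/Rlt_le/invS_gt0]. Qed.

Lemma dist_eq0 s t : dist s t = R0 <-> s = t.
Proof.
rewrite /dist; case: pselect => // neq_st; split => // E.
by have := invS_gt0 (first_diff s t); rewrite E => /Rlt_irrefl.
Qed.

Lemma dist_sym s t : dist s t = dist t s.
Proof.
rewrite /dist first_diff_sym.
by case: pselect => [->|neq_st]; case: pselect => // /esym.
Qed.

Lemma dist_le_agree s t n : agree s t n -> Rle (dist s t) (Rinv (INR n.+1)).
Proof.
rewrite /dist; case: pselect => [_ _|neq_st Ast]; first exact/Rlt_le/invS_gt0.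
exact/invS_le/(first_diffP neq_st).
Qed.

Lemma agree_dist_lt s t n : Rlt (dist s t) (Rinv (INR n.+1)) -> agree s t n.+1.
Proof.
rewrite /dist; case: pselect => [-> _ m|neq_st lt_d]; first by [].
apply/(first_diffP neq_st); rewrite ltnNge; apply/negP => le_d.
exact/(Rlt_not_le _ _ lt_d)/invS_le.
Qed.

Lemma dist_ultra s t u : Rle (dist s u) (Rmax (dist s t) (dist t u)).
Proof.
have [<-|neq_tu] := pselect (t = u).
  by apply: Rmax_l.
have [<-|neq_st] := pselect (s = t).
  by apply: Rmax_r.
have agree_min : agree s u (minn (first_diff s t) (first_diff t u)).
  have Ast : agree s t (minn (first_diff s t) (first_diff t u)).
    by apply/(first_diffP neq_st); exact: geq_minl.
  have Atu : agree t u (minn (first_diff s t) (first_diff t u)).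
    by apply/(first_diffP neq_tu); exact: geq_minr.
  by move=> m Hm; rewrite Ast // Atu.
apply: (Rle_trans _ _ _ (dist_le_agree agree_min)); rewrite /dist.
case: pselect => // _; case: pselect => // _.
by case: leqP => _; [apply: Rmax_l|apply: Rmax_r].
Qed.

Lemma dist_triangle s t u : Rle (dist s u) (Rplus (dist s t) (dist t u)).
Proof.
apply: (Rle_trans _ _ _ (dist_ultra s t u)); have := dist_ge0 s t; have := dist_ge0 t u.
by move=> *; apply: Rmax_lub; lra.
Qed.

Lemma dist_ball_sub_Xcyl t i : exists2 e, Rlt R0 e & [set s | Rlt (dist t s) e] `<=` Xcyl t i.
Proof.
have [n <-] := enum_Idx_surj i; exists (Rinv (INR n.+1)); first exact: invS_gt0.
by move=> s /agree_dist_lt Ats; rewrite /Xcyl /= (Ats n).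
Qed.

Lemma Xcyl_sub_dist_ball t e : Rlt R0 e -> exists i, Xcyl t i `<=` [set s | Rlt (dist t s) e].
Proof.
move=> e_gt0; have [N [N_gt0 lt_invN]] := archimed_cor1 e e_gt0.
have [i Hi] := Ile_ub_seq [seq enum_Idx m | m <- iota 0 N].
exists i => s /= Es.
have Ats : agree t s N.
  move=> m Hm; apply: (Xtilde_eq_mono (Xtilde_valP t) (Xtilde_valP s) _ (esym Es)).
  by apply/Hi/map_f; rewrite mem_iota.
have := dist_le_agree Ats; have : Rle (Rinv (INR N.+1)) (Rinv (INR N)).
  by apply: Rinv_le_contravar; [exact: lt_0_INR|apply/le_INR/leP].
lra.
Qed.

Lemma Xtilde_metrizable : metrizable Xt.
Proof.
exists dist; split; [exact: dist_ge0|exact: dist_eq0|exact: dist_sym|exact: dist_triangle|].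
move=> U; rewrite Xtilde_openP; split=> oU t /oU [i tiU].
  by have [e e_gt0 te] := dist_ball_sub_Xcyl t i; exists e; split => // s /te /tiU.
by have [j tj] := Xcyl_sub_dist_ball t (proj1 tiU); exists j => s /tj /(proj2 tiU).
Qed.

Lemma Spl_shiftP y : Spl X shift y <->
  X y /\ exists a b, [/\ a <> b, X (catw [:: a] y) & X (catw [:: b] y)].
Proof.
split; last first.
  move=> [Xy [a [b [neq_ab Xay Xby]]]].
  split => //; exists (catw [:: a] y), (catw [:: b] y).
  split => //; [|exact: shift_catw1|exact: shift_catw1].
  by move=> /(congr1 (fun x => x 0%N)) /= /neq_ab.
move=> [Xy [y1 [y2 [X1 X2 neq12 E1 E2]]]].
split => //; exists (y1 0%N), (y2 0%N).
rewrite -{1}E1 -E2 !catw_head_shift; split => // E0; apply: neq12.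
by rewrite -(catw_head_shift y1) -(catw_head_shift y2) E0 E1 E2.
Qed.

Lemma Spl_kl_equiv01 y w : Spl X shift y -> X w -> ke I01 y w -> Spl X shift w.
Proof.
move=> /Spl_shiftP [_ [a [b [neq_ab Xay Xby]]]] Xw Eyw; apply/Spl_shiftP.
by split => //; exists a, b; split => //; exact: kl_equiv01_catw Eyw _.
Qed.

(* a and b are the first letters of the points underlying two distinct preimages. *)
Lemma Spl_tilde_letters (t : Xt) y : Spl [set: Xt] (sigma_tilde X) t -> underlies (val t) y ->
  exists a b, [/\ a <> b, X (catw [:: a] y), X (catw [:: b] y),
                  admissible a (val t) & admissible b (val t)].
Proof.
move=> [_ [s1 [s2 [_ _ neq12 E1 E2]]]] ty.
have [y1 y1s1 Xy1] := underlies_ex (Xtilde_valP s1).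
have [y2 y2s2 Xy2] := underlies_ex (Xtilde_valP s2).
have Et1 : shift_tilde X (val s1) = val t by rewrite -sigma_tildeE E1.
have Et2 : shift_tilde X (val s2) = val t by rewrite -sigma_tildeE E2.
have Ey1 : shift y1 = y.
  by apply: (underlies_unique (Xtilde_valP t) _ ty); rewrite -Et1; exact: underlies_shift (Xtilde_valP s1) y1s1.
have Ey2 : shift y2 = y.
  by apply: (underlies_unique (Xtilde_valP t) _ ty); rewrite -Et2; exact: underlies_shift (Xtilde_valP s2) y2s2.
exists (y1 0%N), (y2 0%N); split.
- move=> E0; apply/neq12/val_inj.
  by apply: (shift_tilde_inj (Xtilde_valP s1) (Xtilde_valP s2) _ y1s1 y2s2 E0); rewrite Et1 Et2.
- by rewrite -Ey1 catw_head_shift.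
- by rewrite -Ey2 catw_head_shift.
- by rewrite -Et1; exact: admissible_head (Xtilde_valP s1) y1s1.
- by rewrite -Et2; exact: admissible_head (Xtilde_valP s2) y2s2.
Qed.

Lemma Spl_tilde_underlies (t : Xt) y : Spl [set: Xt] (sigma_tilde X) t -> underlies (val t) y ->
  Spl X shift y.
Proof.
move=> tS ty; have [a [b [neq_ab Xay Xby _ _]]] := Spl_tilde_letters tS ty.
apply/Spl_shiftP; split; last by exists a, b.
by rewrite -(shift_catw1 a y); exact: subshift_shift.
Qed.

Definition Xtilde_of (y : nat -> A) (Xy : X y) : Xt :=
  exist _ (fun i => cls X i y) (mem_set (Xtilde_cls Xy)).

Lemma sigma_Xtilde_of a y (Xay : X (catw [:: a] y)) (Xy : X y) :
  sigma_tilde X (Xtilde_of Xay) = Xtilde_of Xy.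
Proof.
apply/val_inj/funext => i; rewrite sigma_tildeE /=.
by rewrite (shift_tildeE (Xtilde_cls Xay) (cls_refl (Isucc i) Xay)) shift_catw1.
Qed.

Lemma Spl_Xtilde_of y (Xy : X y) : Spl X shift y -> Spl [set: Xt] (sigma_tilde X) (Xtilde_of Xy).
Proof.
move=> /Spl_shiftP [_ [a [b [neq_ab Xay Xby]]]].
split => //; exists (Xtilde_of Xay), (Xtilde_of Xby); split => //; last first.
- exact: sigma_Xtilde_of.
- exact: sigma_Xtilde_of.
move=> /(congr1 (fun t : Xt => val t I11)) /= /(cls_inj Xby) [Eab _].
by apply: neq_ab; have := Eab 0%N isT.
Qed.

Section BranchPoints.
Variable K : nat.
Hypothesis Spl_sep : forall u v, Spl X shift u -> Spl X shift v ->
  (forall n, (n < K)%N -> u n = v n) -> u = v.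

(* A family whose (K,K+1)-class is that of a branch point y is the family of y:
   every deeper representative shares the first K letters of y and is itself a
   branch point, hence equals y. *)
Lemma Xtilde_Spl_rigid f y : Xt f -> Spl X shift y ->
  f (Ikk1 K) = cls X (Ikk1 K) y -> f = fun i => cls X i y.
Proof.
move=> Hf Sy fK; apply: funext => i; have [j [le_ij le_Kj]] := Ile_directed i (Ikk1 K).
have [w fw] := Xtilde_nonempty j Hf; have [Xw _] := XtildeE Hf fw.
have Eyw : ke (Ikk1 K) y w by move: (Xtilde_mono Hf le_Kj fw); rewrite fK => /cls_equiv.
have Sw := Spl_kl_equiv01 Sy Xw (kl_equiv_mono (Ile_I01_Ikk1 K) Eyw).
have -> : y = w by apply: Spl_sep => // n /(proj1 Eyw).
by have [_ ->] := XtildeE Hf (Xtilde_mono Hf le_ij fw).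
Qed.

Lemma Spl_tilde_cls (t : Xt) y : Spl [set: Xt] (sigma_tilde X) t -> underlies (val t) y ->
  val t = fun i => cls X i y.
Proof.
move=> tS ty; have Sy := Spl_tilde_underlies tS ty.
have [a [b [neq_ab _ _ ta tb]]] := Spl_tilde_letters tS ty.
apply: (Xtilde_Spl_rigid (Xtilde_valP t) Sy).
have [w tw] := Xtilde_nonempty (Ikk1 K) (Xtilde_valP t); have [Xw ->] := XtildeE (Xtilde_valP t) tw.
have tw01 := Xtilde_mono (Xtilde_valP t) (Ile_I01_Ikk1 K) tw.
suff -> : w = y by [].
apply: Spl_sep => [||n Hn]; last exact: ty tw n Hn.
- by apply/Spl_shiftP; split => //; exists a, b; split; [|exact: ta|exact: tb].
- exact: Sy.
Qed.

Definition upoint (t : Xt) : nat -> A := s2val (cid2 (underlies_ex (Xtilde_valP t))).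

Lemma underlies_upoint t : underlies (val t) (upoint t).
Proof. exact: (s2valP (cid2 (underlies_ex (Xtilde_valP t)))). Qed.

Lemma Spl_tilde_image : Spl X shift = upoint @` Spl [set: Xt] (sigma_tilde X).
Proof.
apply/seteqP; split=> [y Sy|_ [t tS <-]]; last exact: Spl_tilde_underlies tS (@underlies_upoint t).
have Xy : X y by case: Sy.
exists (Xtilde_of Xy); first exact: Spl_Xtilde_of.
exact: underlies_unique (Xtilde_cls Xy) (@underlies_upoint (Xtilde_of Xy)) (@underlies_cls y).
Qed.

Lemma upoint_inj : {in Spl [set: Xt] (sigma_tilde X) &, injective upoint}.
Proof.
move=> s t /set_mem sS /set_mem tS E; apply: val_inj.
by rewrite (Spl_tilde_cls sS (@underlies_upoint s)) (Spl_tilde_cls tS (@underlies_upoint t)) E.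
Qed.

Lemma Spl_tilde_card : (Spl [set: Xt] (sigma_tilde X) #= Spl X shift)%card.
Proof. by rewrite Spl_tilde_image; apply/card_esym/inj_card_eq/upoint_inj. Qed.

Lemma Spl_tilde_isolated (t : Xt) : Spl [set: Xt] (sigma_tilde X) t -> isolated_point t.
Proof.
move=> tS; have Et := Spl_tilde_cls tS (@underlies_upoint t).
have Sy := Spl_tilde_underlies tS (@underlies_upoint t).
rewrite /isolated_point (_ : [set t] = Xcyl t (Ikk1 K)); first exact: open_Xcyl.
apply/seteqP; split=> [s -> //|s Es]; apply/val_inj.
by rewrite Et; apply: Xtilde_Spl_rigid (Xtilde_valP s) Sy _; rewrite Es Et.
Qed.

End BranchPoints.

End ProjectiveLimit.

Theorem theorem3p5 (A : finType) (X : set (nat -> A)) :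
  subshift X ->
  shift @` X = X ->
  aperiodic_on X shift ->
  finite_set (Spl X shift) ->
  [/\ zero_dimensional (Xtilde X),
      compact (@setT (Xtilde X)),
      metrizable (Xtilde X),
      (forall f, Xtilde X f -> Xtilde X (shift_tilde X f)) &
      [/\ aperiodic_on (@setT (Xtilde X)) (sigma_tilde X),
          (forall t : Xtilde X, exists s, sigma_tilde X s = t),
          local_homeo (sigma_tilde X),
          finite_set (Spl (@setT (Xtilde X)) (sigma_tilde X)) /\
            (Spl (@setT (Xtilde X)) (sigma_tilde X) #= Spl X shift)%card &
          (forall t : Xtilde X, Spl (@setT (Xtilde X)) (sigma_tilde X) t ->
             isolated_point t)]].
Proof.
move=> subshiftX shiftX aperX finSpl.
have [K Spl_sep] := finite_seqs_separated finSpl.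
have cardSpl := Spl_tilde_card subshiftX shiftX Spl_sep.
split; first exact: Xtilde_zero_dimensional.
- exact: Xtilde_compact.
- exact: Xtilde_metrizable.
- exact: Xtilde_shift_tilde.
split.
- exact: sigma_tilde_aperiodic.
- exact: sigma_tilde_surj.
- exact: sigma_tilde_local_homeo.
- by rewrite (eq_finite_set cardSpl).
- exact: Spl_tilde_isolated Spl_sep.
Qed.
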